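(* Let $G$ be a finite connected graph with chromatic number $\chi$, let $c$ be a nice $\chi$-coloring of $G$, and let $(V^c_1,\dots,V^c_k)$ be the level partition of $D_c$. Let $B_c$ be the set of vertices $x$ of $G$ such that there is no colorful path (with respect to $c$) starting at $x$. Then $B_c\subseteq V^c_2\cup V^c_3\cup\dots\cup V^c_{\chi-1}$.
   Context: A proper $\chi$-coloring is a map $c:V(G)\to\{1,\dots,\chi\}$ with adjacent vertices receiving different colors; colors are considered modulo $\chi$. A colorful path is a path on $\chi$ distinct vertices of $G$ whose colors are pairwise distinct. $D_c$ is the oriented graph on $V(G)$ with an arc $ab$ if and only if $\{a,b\}\in E(G)$ and $c(b)\equiv c(a)+1\pmod{\chi}$. The coloring $c$ is nice if $D_c$ is acyclic and has exactly one sink (vertex of out-degree $0$). For an acyclic oriented graph $D$, the level partition is the unique partition $(V_1,\dots,V_k)$ of $V(D)$ such that $V_i$ is the set of sinks of the subdigraph of $D$ induced on $V(D)\setminus(V_1\cup\dots\cup V_{i-1})$. *)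

From mathcomp Require Import all_boot.
Set Implicit Arguments. Unset Strict Implicit. Unset Printing Implicit Defensive.

Definition simple_graph (T : finType) (e : rel T) : Prop :=
  symmetric e /\ irreflexive e.

Definition connected_graph (T : finType) (e : rel T) : Prop :=
  forall x y : T, connect e x y.

(* Proper k-colouring; colours are 0..k-1 (representatives mod k). *)
Definition proper_coloring (T : finType) (e : rel T) (k : nat) (c : T -> nat) : Prop :=
  (forall x, c x < k) /\ (forall x y, e x y -> c x != c y).

Definition chromatic_number (T : finType) (e : rel T) (chi : nat) : Prop :=
  (exists c, proper_coloring e chi c) /\
  (forall k, k < chi -> forall c, ~ proper_coloring e k c).

Definition Dc (T : finType) (e : rel T) (chi : nat) (c : T -> nat) : rel T :=
  fun a b => e a b && (c b %% chi == (c a).+1 %% chi).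

Definition is_sink (T : finType) (D : rel T) (x : T) : bool :=
  [forall y, ~~ D x y].

Definition acyclic (T : finType) (D : rel T) : Prop :=
  forall x y, D x y -> ~~ connect D y x.

Definition nice (T : finType) (e : rel T) (chi : nat) (c : T -> nat) : Prop :=
  acyclic (Dc e chi c) /\ #|[set x | is_sink (Dc e chi c) x]| = 1.

(* Level partition: upto n = V_1 ∪ ... ∪ V_n, where V_{n+1} is the set of
   sinks of D restricted to the vertices outside upto n. *)
Fixpoint levels_upto (T : finType) (D : rel T) (n : nat) : {set T} :=
  match n with
  | 0 => set0
  | n'.+1 =>
      let U := levels_upto D n' in
      U :|: [set x | (x \notin U) && [forall y, (y \notin U) ==> ~~ D x y]]
  end.

Definition level (T : finType) (D : rel T) (i : nat) : {set T} :=
  levels_upto D i :\: levels_upto D i.-1.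

Definition colorful_path_from (T : finType) (e : rel T) (chi : nat)
    (c : T -> nat) (x : T) (p : seq T) : Prop :=
  [/\ size (x :: p) = chi, path e x p, uniq (x :: p) & uniq (map c (x :: p))].

Definition in_Bc (T : finType) (e : rel T) (chi : nat) (c : T -> nat) (x : T) : Prop :=
  ~ exists p : seq T, colorful_path_from e chi c x p.

From mathcomp Require Import all_boot zify.
Set Implicit Arguments. Unset Strict Implicit. Unset Printing Implicit Defensive.

(* Going down one level always follows an arc of D_c, and along an arc the colour
   increases by one modulo chi, so any path of D_c on chi vertices is colorful;
   hence a vertex of level at least chi starts a colorful path.  A vertex of level 1
   is the unique sink.  By the Gallai-Roy argument D_c has a path on chi vertices;
   its first vertex has level at least chi, so some vertex w has level exactly chi,
   and descending from w ends at the sink: read backwards, this path is colorful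
   and starts at the sink. *)

Section LevelPartition.
Variables (T : finType) (D : rel T).

Lemma levels_upto_arc i x y :
  x \in levels_upto D i.+1 -> D x y -> y \in levels_upto D i.
Proof.
elim: i x y => [|i IH] x y.
  by rewrite /= set0U inE => /andP[_ /forallP/(_ y)]; rewrite in_set0 /= => /negbTE->.
rewrite [levels_upto D i.+2]/= inE => /orP[xi Dxy|].
  by rewrite inE (IH _ _ xi Dxy).
rewrite inE => /andP[_ /forallP/(_ y) /implyP sinkx] Dxy.
by apply: contraLR Dxy => /sinkx.
Qed.

Lemma level_arc_pred i x : 1 < i -> x \in level D i ->
  exists2 y, D x y & y \in level D i.-1.
Proof.
case: i => [|[|j]] // _; rewrite /level inE => /andP[xNj].
rewrite [levels_upto D j.+2]/= inE (negbTE xNj) /= inE => /andP[_ /forallP sinkx].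
move: xNj; rewrite [levels_upto D j.+1]/= inE negb_or inE negb_and => /andP[xNj].
rewrite xNj /= => /forallPn[y]; rewrite negb_imply negbK => /andP[yNj Dxy].
exists y => //; rewrite /level inE yNj /=.
by apply: contraLR Dxy => /(implyP (sinkx y)).
Qed.

Lemma level_path_down n i x : n < i -> x \in level D i ->
  exists p, [/\ size p = n, path D x p & last x p \in level D (i - n)].
Proof.
elim: n i x => [|n IH] i x lt_ni xi; first by exists [::]; rewrite subn0.
have [|y Dxy yi] := level_arc_pred _ xi; first lia.
have [|p [<- yp py]] := IH _ _ _ yi; first lia.
exists (y :: p); split => //=; first by rewrite Dxy.
by have -> : i - (size p).+1 = i.-1 - size p by lia.
Qed.

Lemma level1_sink x : x \in level D 1 -> is_sink D x.
Proof.
rewrite /level inE => /andP[_]; rewrite /= set0U inE => /andP[_ /forallP sinkx].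
by apply/forallP => y; have := sinkx y; rewrite in_set0.
Qed.

Lemma path_size_levels_upto i x p :
  path D x p -> x \in levels_upto D i -> size p < i.
Proof.
elim: p i x => [|y p IH] [|i] x //=; rewrite ?in_set0 // => /andP[Dxy yp] xi.
by rewrite ltnS (IH _ _ yp (levels_upto_arc xi Dxy)).
Qed.

Hypothesis acyclicD : acyclic D.

Lemma acyclic_path_uniq x p : path D x p -> uniq (x :: p).
Proof.
elim: p x => [|y p IH] x //= /andP[Dxy yp]; have /= -> := IH _ yp; rewrite andbT.
by apply: contra (acyclicD Dxy) => /(path_connect yp).
Qed.

(* A vertex lies in levels_upto D n as soon as at most n vertices are reachable
   from it: its successors reach strictly fewer vertices, by acyclicity. *)
Lemma mem_levels_upto_card x : x \in levels_upto D #|T|.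
Proof.
suff: forall n x, #|[set y | connect D x y]| <= n -> x \in levels_upto D n.
  by apply; apply: max_card.
elim=> [|n IH] {}x reach_x.
  by move: reach_x; rewrite leqn0 cards_eq0 => /eqP/setP/(_ x); rewrite !inE connect0.
rewrite /= inE; case: (boolP (x \in levels_upto D n)) => //= xNn; rewrite inE xNn.
apply/forallP => y; apply/implyP; apply: contraNN => Dxy; apply: IH.
have reach_sub : [set z | connect D y z] \proper [set z | connect D x z].
  apply/properP; split.
    by apply/subsetP => z; rewrite !inE; apply: connect_trans (connect1 Dxy).
  by exists x; rewrite !inE ?connect0 // (acyclicD Dxy).
by have := proper_card reach_sub; lia.
Qed.

Lemma level_exists x : exists2 i, 0 < i & x \in level D i.
Proof.
have exP : exists n, x \in levels_upto D n by exists #|T|; apply: mem_levels_upto_card.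
case: (ex_minnP exP) => [[|i] xi min_i]; first by rewrite in_set0 in xi.
exists i.+1 => //; rewrite /level inE xi andbT.
by apply/negP => /min_i; rewrite ltnn.
Qed.

End LevelPartition.

Section ColorfulPaths.
Variables (T : finType) (e : rel T) (chi : nat) (c : T -> nat).
Hypothesis c_lt : forall x, c x < chi.

Lemma Dc_path_colors x p : path (Dc e chi c) x p ->
  map c (x :: p) = [seq (c x + k) %% chi | k <- iota 0 (size p).+1].
Proof.
elim: p x => [|y p IH] x; first by rewrite /= addn0 modn_small.
rewrite [path _ _ _]/= => /andP[/andP[_ cy] yp].
have -> : iota 0 (size (y :: p)).+1 = 0 :: map (addn 1) (iota 0 (size p).+1).
  by rewrite -iotaDl.
rewrite (map_cons c x) IH // map_cons -map_comp addn0 modn_small //.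
congr (_ :: _); apply: eq_map => k /=.
by rewrite -(modn_small (c_lt y)) (eqP cy) modnDml add1n addSnnS.
Qed.

Lemma uniq_iota_mod a n : n <= chi -> uniq [seq (a + k) %% chi | k <- iota 0 n].
Proof.
move=> le_n; rewrite map_inj_in_uniq ?iota_uniq // => k1 k2.
rewrite !mem_iota /= => k1n k2n /eqP; rewrite eqn_modDl !modn_small; lia.
Qed.

Lemma Dc_path_colorful x p : acyclic (Dc e chi c) ->
  path (Dc e chi c) x p -> size p = chi.-1 -> colorful_path_from e chi c x p.
Proof.
move=> acyc xp size_p; have chi_gt0 : 0 < chi by have := c_lt x; lia.
split.
- by rewrite /= size_p prednK.
- by apply: sub_path xp => a b /andP[].
- exact: acyclic_path_uniq xp.
- by rewrite Dc_path_colors // uniq_iota_mod // size_p prednK.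
Qed.

End ColorfulPaths.

Lemma colorful_path_rev (T : finType) (e : rel T) chi c x p : symmetric e ->
  colorful_path_from e chi c x p ->
  colorful_path_from e chi c (last x p) (rev (belast x p)).
Proof.
move=> sym_e [size_p xp uniq_p uniq_cp].
have rev_p : last x p :: rev (belast x p) = rev (x :: p) by rewrite [x :: p]lastI rev_rcons.
split; rewrite ?rev_p ?size_rev ?rev_uniq ?map_rev ?rev_uniq //.
by rewrite rev_path; apply: sub_path xp => a b /=; rewrite sym_e.
Qed.

Section GallaiRoy.
Variables (T : finType) (e : rel T) (chi : nat) (c : T -> nat).
Hypotheses (sym_e : symmetric e) (proper_c : proper_coloring e chi c).

Let up_arc : rel T := [rel a b | e a b && (c b == (c a).+1)].

(* Arcs of D_c that do not wrap around modulo chi, followed from colour 0. *)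
Let reach0 : {set T} := [set v | [exists u, (c u == 0) && connect up_arc u v]].

Lemma reach0_top_path v : v \in reach0 -> c v = chi.-1 ->
  exists u p, path (Dc e chi c) u p /\ size p = chi.-1.
Proof.
rewrite inE => /existsP[u /andP[/eqP cu /connectP[p up ->]]] cv.
exists u, p; split.
  by apply: sub_path up => a b /andP[eab /eqP cb]; rewrite /Dc eab cb eqxx.
suff c_last : c (last u p) = c u + size p by rewrite -cv c_last cu.
elim: p u {cu cv} up => [|y p IH] u /=; first by rewrite addn0.
by case/andP=> /andP[_ /eqP cy] /IH->; rewrite cy addSnnS.
Qed.

(* Lowering by one every colour outside reach0: the colour 0 lies in reach0,
   and an edge leaving reach0 cannot go up by exactly one. *)
Lemma reach0_lower_coloring :
  (forall v, v \in reach0 -> c v != chi.-1) ->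
  proper_coloring e chi.-1 (fun v => c v + (v \in reach0) - 1).
Proof.
have [c_lt c_proper] := proper_c.
move=> not_top; have c0_reach v : c v = 0 -> v \in reach0.
  by move=> cv; rewrite inE; apply/existsP; exists v; rewrite cv connect0.
have reach_up a b : a \in reach0 -> e a b -> c b = (c a).+1 -> b \in reach0.
  rewrite !inE => /existsP[u /andP[cu ua]] eab cb; apply/existsP; exists u.
  by rewrite cu (connect_trans ua) // connect1 // /up_arc /= eab cb eqxx.
split=> [v|x y exy].
  have := c_lt v; case: (boolP (v \in reach0)) => [/not_top|vN]; first by move/eqP; lia.
  by case: (c v =P 0) => [/c0_reach|]; [rewrite (negbTE vN)|lia].
have eyx : e y x by rewrite sym_e.
have /eqP cxy := c_proper x y exy.
case: (boolP (x \in reach0)) => xr; case: (boolP (y \in reach0)) => yr /=;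
  apply/eqP => Heq.
- lia.
- case: (c y =P 0) => [/c0_reach|cy]; first by rewrite (negbTE yr).
  by move: yr; rewrite (reach_up x y) //; lia.
- case: (c x =P 0) => [/c0_reach|cx]; first by rewrite (negbTE xr).
  by move: xr; rewrite (reach_up y x) //; lia.
- case: (c x =P 0) => [/c0_reach|]; first by rewrite (negbTE xr).
  by case: (c y =P 0) => [/c0_reach|]; [rewrite (negbTE yr)|lia].
Qed.

Lemma Dc_long_path : chromatic_number e chi -> 0 < chi ->
  exists u p, path (Dc e chi c) u p /\ size p = chi.-1.
Proof.
move=> [_ chi_min] chi_gt0.
case: (boolP [exists v, (v \in reach0) && (c v == chi.-1)]).
  by case/existsP=> v /andP[vr /eqP cv]; apply: reach0_top_path vr cv.
move=> no_top; exfalso; apply: (chi_min chi.-1 _ _ (reach0_lower_coloring _)).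
  by rewrite prednK.
by move=> v vr; apply: contra no_top => cv; apply/existsP; exists v; rewrite vr.
Qed.

End GallaiRoy.

Section ColorfulFromLevels.
Variables (T : finType) (e : rel T) (chi : nat) (c : T -> nat).
Hypotheses (c_lt : forall x, c x < chi) (acyc : acyclic (Dc e chi c)).

Lemma high_level_colorful i x : chi <= i -> x \in level (Dc e chi c) i ->
  exists p, colorful_path_from e chi c x p.
Proof.
move=> le_chi_i xi; have chi_gt0 : 0 < chi by have := c_lt x; lia.
have [|p [size_p xp _]] := level_path_down (n := chi.-1) _ xi; first lia.
by exists p; apply: Dc_path_colorful.
Qed.

Lemma nice_sink_colorful x : symmetric e -> chromatic_number e chi ->
  proper_coloring e chi c -> nice e chi c -> is_sink (Dc e chi c) x ->
  exists p, colorful_path_from e chi c x p.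
Proof.
move=> sym_e chrom proper_c [_ one_sink] sink_x.
have chi_gt0 : 0 < chi by have := c_lt x; lia.
have [u [p [up size_p]]] := Dc_long_path sym_e proper_c chrom chi_gt0.
have [j _ uj] := level_exists acyc u.
have le_chi_j : chi <= j.
  by move: uj; rewrite inE => /andP[_ /(path_size_levels_upto up)]; lia.
have [|q [_ _ wq]] := level_path_down (n := j - chi) _ uj; first lia.
rewrite (_ : j - (j - chi) = chi) in wq; last lia.
have [|r [size_r wr zr]] := level_path_down (n := chi.-1) _ wq; first lia.
rewrite (_ : chi - chi.-1 = 1) in zr; last lia.
have [s sinksE] := cards1P (introT eqP one_sink).
have sink_eq y : is_sink (Dc e chi c) y -> y = s.
  by move=> sink_y; apply/set1P; rewrite -sinksE inE.
rewrite (sink_eq x sink_x) -(sink_eq _ (level1_sink zr)).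
by eexists; apply/colorful_path_rev/Dc_path_colorful.
Qed.

End ColorfulFromLevels.

Theorem lemma7 (T : finType) (e : rel T) (chi : nat) (c : T -> nat) :
  simple_graph e -> connected_graph e -> chromatic_number e chi ->
  proper_coloring e chi c -> nice e chi c ->
  forall x : T, in_Bc e chi c x ->
    x \in \bigcup_(2 <= i < chi) level (Dc e chi c) i.
Proof.
move=> [sym_e _] _ chrom proper_c nice_c x no_colorful.
have [c_lt _] := proper_c; have [acyc _] := nice_c.
have [i i_gt0 xi] := level_exists acyc x.
case: (leqP chi i) => [le_chi_i|lt_i_chi].
  by case: no_colorful; apply: high_level_colorful xi.
have [i1|i_ne1] := eqVneq i 1.
  case: no_colorful; apply: nice_sink_colorful => //.
  by apply: level1_sink; rewrite -i1.
rewrite (bigD1_seq i) ?mem_index_iota ?iota_uniq ?in_setU ?xi //; lia.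
Qed.
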